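(* Let $\Xi$ be a set in a normed space and let $\xi\mapsto\tilde A(\xi)\in\mathbb{R}^{n\times n}$ and $\xi\mapsto\tilde B(\xi)\in\mathbb{R}^{n\times m}$ be Lipschitz continuous with respect to the spectral norm, with Lipschitz constants $L_A$ and $L_B$ respectively. Fix $\alpha>0$, $r>0$, $\theta\in\mathbb{R}$ and $\mu>0$. For $P\in\mathbb{S}^n$, $Y\in\mathbb{R}^{m\times n}$, $\gamma\in\mathbb{R}$ set $X(\xi)=\tilde A(\xi)P-\tilde B(\xi)Y$ and define the matrix-valued constraint maps $$f_1(P,Y,\gamma,\xi)=X(\xi)+X(\xi)^T+2\alpha P-\gamma I,$$ $$f_2(P,Y,\gamma,\xi)=\begin{bmatrix}-rP & X(\xi)\\ X(\xi)^T & -rP\end{bmatrix}-\gamma I,$$ $$f_3(P,Y,\gamma,\xi)=\begin{bmatrix}\sin\theta\,(X(\xi)+X(\xi)^T) & \cos\theta\,(X(\xi)-X(\xi)^T)\\ \cos\theta\,(X(\xi)^T-X(\xi)) & \sin\theta\,(X(\xi)+X(\xi)^T)\end{bmatrix}-\gamma I.$$ Then each $f_k$, $k=1,2,3$, is Lipschitz continuous in $\xi$ (with respect to the spectral norm), uniformly over all $\gamma\in\mathbb{R}$ and all $P,Y$ satisfying $0\preceq P\preceq\mu I$ and $\|Y\|\le\mu$, with Lipschitz constant $$L=2\mu(L_A+L_B)\max\big(1,\ |\sin\theta|+|\cos\theta|\big),$$ i.e. $\|f_k(P,Y,\gamma,\xi_1)-f_k(P,Y,\gamma,\xi_2)\|\le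 L\|\xi_1-\xi_2\|$ for all $\xi_1,\xi_2\in\Xi$.
   Context: $\|\cdot\|$ denotes the spectral norm of a matrix; $\mathbb{S}^n$ is the set of real symmetric $n\times n$ matrices and $\preceq$ is the Loewner order. The maps $f_1,f_2,f_3$ encode the LMI constraints $f_k\prec 0$ of a regional pole-placement (D-stability) problem for the uncertain system $\dot x=\tilde A(\xi)x+\tilde B(\xi)u$, with parameters $\alpha$ (minimal decay), $r$ (disk radius) and $\theta$ (conic sector). *)

From HB Require Import structures.
From mathcomp Require Import all_boot all_order all_algebra.
From mathcomp Require Import all_classical all_reals all_analysis.
Set Implicit Arguments. Unset Strict Implicit. Unset Printing Implicit Defensive.
Import Order.TTheory GRing.Theory Num.Theory.
Import numFieldNormedType.Exports.
Local Open Scope classical_set_scope.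
Local Open Scope ring_scope.

Section Defs.
Variable R : realType.

Definition vnorm2 (k : nat) (v : 'cV[R]_k) : R :=
  Num.sqrt (\sum_(i < k) v i 0 ^+ 2).

Definition specnorm (p q : nat) (A : 'M[R]_(p, q)) : R :=
  sup [set vnorm2 (A *m x) | x in [set x : 'cV[R]_q | vnorm2 x <= 1]].

Definition loewner_le (n : nat) (P Q : 'M[R]_n) : Prop :=
  forall x : 'cV[R]_n, (x^T *m P *m x) 0 0 <= (x^T *m Q *m x) 0 0.

Definition Xmat (n m : nat) (At : 'M[R]_n) (Bt : 'M[R]_(n, m))
  (P : 'M[R]_n) (Y : 'M[R]_(m, n)) : 'M[R]_n := At *m P - Bt *m Y.

Definition f1 (n m : nat) (alpha : R) (P : 'M[R]_n) (Y : 'M[R]_(m, n)) (gamma : R)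
  (At : 'M[R]_n) (Bt : 'M[R]_(n, m)) : 'M[R]_n :=
  let X := Xmat At Bt P Y in X + X^T + (2 * alpha) *: P - gamma%:M.

Definition f2 (n m : nat) (r : R) (P : 'M[R]_n) (Y : 'M[R]_(m, n)) (gamma : R)
  (At : 'M[R]_n) (Bt : 'M[R]_(n, m)) : 'M[R]_(n + n) :=
  let X := Xmat At Bt P Y in
  block_mx (- (r *: P)) X X^T (- (r *: P)) - gamma%:M.

Definition f3 (n m : nat) (theta : R) (P : 'M[R]_n) (Y : 'M[R]_(m, n)) (gamma : R)
  (At : 'M[R]_n) (Bt : 'M[R]_(n, m)) : 'M[R]_(n + n) :=
  let X := Xmat At Bt P Y in
  block_mx (sin theta *: (X + X^T)) (cos theta *: (X - X^T))
           (cos theta *: (X^T - X)) (sin theta *: (X + X^T)) - gamma%:M.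

End Defs.

(* Every difference f_k(xi1) - f_k(xi2) depends on xi only through
   D = (A(xi1) - A(xi2)) P - (B(xi1) - B(xi2)) Y, and
   |D| <= mu (L_A + L_B) |xi1 - xi2| because |P| <= mu whenever 0 <= P <= mu I.
   The three differences are D + D^T, the antidiagonal block matrix
   [0 D; D^T 0], and the sum of a block-diagonal matrix with blocks
   sin(theta) (D + D^T) and an antidiagonal one with blocks +-cos(theta) (D - D^T).
   The spectral norm is subadditive and invariant under transposition, and a
   block-(anti)diagonal matrix has norm at most the largest norm of its blocks,
   so their norms are at most 2|D|, |D| and 2 (|sin theta| + |cos theta|) |D|. *)

From HB Require Import structures.
From mathcomp Require Import all_boot all_order all_algebra.
From mathcomp Require Import all_classical all_reals all_analysis.
From mathcomp Require Import ring lra.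
Set Implicit Arguments. Unset Strict Implicit. Unset Printing Implicit Defensive.
Import Order.TTheory GRing.Theory Num.Theory.
Import numFieldNormedType.Exports.
Local Open Scope classical_set_scope.
Local Open Scope ring_scope.

Section EuclideanNorm.
Variable R : realType.

Definition dotmx (k : nat) (u v : 'cV[R]_k) : R := (u^T *m v) 0 0.

Variable k : nat.
Implicit Types (u v w : 'cV[R]_k) (a : R).

Lemma dotmxC u v : dotmx u v = dotmx v u.
Proof. by rewrite /dotmx !mxE; apply: eq_bigr => i _; rewrite !mxE mulrC. Qed.

Lemma dotmxDr u v w : dotmx u (v + w) = dotmx u v + dotmx u w.
Proof. by rewrite /dotmx mulmxDr mxE. Qed.

Lemma dotmxNr u v : dotmx u (- v) = - dotmx u v.
Proof. by rewrite /dotmx mulmxN mxE. Qed.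

Lemma dotmxBr u v w : dotmx u (v - w) = dotmx u v - dotmx u w.
Proof. by rewrite dotmxDr dotmxNr. Qed.

Lemma dotmxZr a u v : dotmx u (a *: v) = a * dotmx u v.
Proof. by rewrite /dotmx -scalemxAr mxE. Qed.

Lemma dotmxDl u v w : dotmx (v + w) u = dotmx v u + dotmx w u.
Proof. by rewrite dotmxC dotmxDr !(dotmxC u). Qed.

Lemma dotmxBl u v w : dotmx (v - w) u = dotmx v u - dotmx w u.
Proof. by rewrite dotmxC dotmxBr !(dotmxC u). Qed.

Lemma dotmxZl a u v : dotmx (a *: v) u = a * dotmx v u.
Proof. by rewrite dotmxC dotmxZr dotmxC. Qed.

Lemma dotmx0l u : dotmx 0 u = 0.
Proof. by rewrite /dotmx trmx0 mul0mx mxE. Qed.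

Lemma dotmx_mulmx (p : nat) (M : 'M[R]_(k, p)) u (v : 'cV[R]_p) :
  dotmx u (M *m v) = dotmx (M^T *m u) v.
Proof. by rewrite /dotmx trmx_mul trmxK mulmxA. Qed.

Lemma dotmxvv u : dotmx u u = \sum_i u i 0 ^+ 2.
Proof. by rewrite /dotmx mxE; apply: eq_bigr => i _; rewrite mxE expr2. Qed.

Lemma dotmxvv_ge0 u : 0 <= dotmx u u.
Proof. by rewrite dotmxvv sumr_ge0 // => i _; rewrite sqr_ge0. Qed.

Lemma vnorm2E u : vnorm2 u = Num.sqrt (dotmx u u).
Proof. by rewrite dotmxvv. Qed.

Lemma vnorm2_ge0 u : 0 <= vnorm2 u.
Proof. exact: sqrtr_ge0. Qed.

Lemma vnorm2_sqr u : vnorm2 u ^+ 2 = dotmx u u.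
Proof. by rewrite vnorm2E sqr_sqrtr ?dotmxvv_ge0. Qed.

Lemma vnorm2_gt0 u : (0 < vnorm2 u) = (u != 0).
Proof.
rewrite vnorm2E sqrtr_gt0 lt_def dotmxvv_ge0 andbT dotmxvv psumr_eq0; last first.
  by move=> i _; rewrite sqr_ge0.
congr (~~ _); apply/allP/eqP => [u0|-> i _] /=.
  apply/matrixP => i j; rewrite (ord1 j) mxE.
  by apply/eqP; rewrite -sqrf_eq0; apply: u0; rewrite mem_index_enum.
by rewrite mxE expr0n.
Qed.

Lemma vnorm20 : vnorm2 (0 : 'cV[R]_k) = 0.
Proof. by rewrite vnorm2E dotmx0l sqrtr0. Qed.

Lemma vnorm2Z a u : vnorm2 (a *: u) = `|a| * vnorm2 u.
Proof.
by rewrite !vnorm2E dotmxZl dotmxZr mulrA -expr2 sqrtrM ?sqr_ge0 // sqrtr_sqr.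
Qed.

Lemma normr_dotmx_le u v : `|dotmx u v| <= vnorm2 u * vnorm2 v.
Proof.
have [->|u0] := eqVneq u 0; first by rewrite dotmx0l normr0 mulr_ge0 ?vnorm2_ge0.
have [->|v0] := eqVneq v 0.
  by rewrite dotmxC dotmx0l normr0 mulr_ge0 ?vnorm2_ge0.
have ab0 : 0 < vnorm2 u * vnorm2 v by rewrite mulr_gt0 ?vnorm2_gt0.
have hu := vnorm2_sqr u; have hv := vnorm2_sqr v.
have := dotmxvv_ge0 (vnorm2 v *: u - vnorm2 u *: v).
have := dotmxvv_ge0 (vnorm2 v *: u + vnorm2 u *: v).
rewrite !(dotmxBl, dotmxBr, dotmxDl, dotmxDr, dotmxZl, dotmxZr) (dotmxC v u).
rewrite -hu -hv => ? ?.
by rewrite ler_norml; apply/andP; split; nra.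
Qed.

Lemma vnorm2D_le u v : vnorm2 (u + v) <= vnorm2 u + vnorm2 v.
Proof.
rewrite -ler_sqr ?nnegrE ?addr_ge0 ?vnorm2_ge0 // sqrrD !vnorm2_sqr.
rewrite dotmxDl !dotmxDr (dotmxC v u).
have := ler_norm (dotmx u v); have := normr_dotmx_le u v; lra.
Qed.

End EuclideanNorm.

Lemma vnorm2_col_mx (R : realType) (p q : nat) (u : 'cV[R]_p) (v : 'cV[R]_q) :
  vnorm2 (col_mx u v) ^+ 2 = vnorm2 u ^+ 2 + vnorm2 v ^+ 2.
Proof. by rewrite !vnorm2_sqr /dotmx tr_col_mx mul_row_col mxE. Qed.

Section SpectralNorm.
Variable R : realType.

Lemma vnorm2_mulmx_le_frobenius (p q : nat) (M : 'M[R]_(p, q)) (x : 'cV[R]_q) :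
  vnorm2 (M *m x) <= Num.sqrt (\sum_i \sum_j M i j ^+ 2) * vnorm2 x.
Proof.
have sum_ge0 : 0 <= \sum_i \sum_j M i j ^+ 2.
  by do 2![apply: sumr_ge0 => ? _]; rewrite sqr_ge0.
rewrite -ler_sqr ?nnegrE ?mulr_ge0 ?sqrtr_ge0 ?vnorm2_ge0 //.
rewrite vnorm2_sqr exprMn (sqr_sqrtr sum_ge0) dotmxvv mulr_suml.
apply: ler_sum => i _.
have -> : (M *m x) i 0 = dotmx (row i M)^T x.
  by rewrite /dotmx trmxK -row_mul [RHS]mxE.
have -> : \sum_j M i j ^+ 2 = vnorm2 (row i M)^T ^+ 2.
  by rewrite vnorm2_sqr dotmxvv; apply: eq_bigr => j _; rewrite !mxE.
rewrite -exprMn -real_normK ?num_real // ler_sqr ?nnegrE ?mulr_ge0 ?vnorm2_ge0 //.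
exact: normr_dotmx_le.
Qed.

Lemma vnorm2_mulmx_le_specnorm (p q : nat) (M : 'M[R]_(p, q)) (x : 'cV[R]_q) :
  vnorm2 x <= 1 -> vnorm2 (M *m x) <= specnorm M.
Proof.
move=> x1; apply: sup_upper_bound; last by exists x.
split; first by exists (vnorm2 (M *m x)), x.
exists (Num.sqrt (\sum_i \sum_j M i j ^+ 2)) => _ [y y1 <-].
apply: le_trans (vnorm2_mulmx_le_frobenius M y) _.
by rewrite ler_piMr ?sqrtr_ge0.
Qed.

Lemma specnorm_ge0 (p q : nat) (M : 'M[R]_(p, q)) : 0 <= specnorm M.
Proof.
by have := @vnorm2_mulmx_le_specnorm _ _ M 0; rewrite mulmx0 !vnorm20 ler01; apply.
Qed.

Lemma vnorm2_mulmx_le (p q : nat) (M : 'M[R]_(p, q)) (x : 'cV[R]_q) :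
  vnorm2 (M *m x) <= specnorm M * vnorm2 x.
Proof.
have [->|x0] := eqVneq x 0; first by rewrite mulmx0 !vnorm20 mulr0.
have nx : 0 < vnorm2 x by rewrite vnorm2_gt0.
have := @vnorm2_mulmx_le_specnorm _ _ M ((vnorm2 x)^-1 *: x).
rewrite -scalemxAr !vnorm2Z ger0_norm ?invr_ge0 ?vnorm2_ge0 // mulVf ?gt_eqF //.
by rewrite lexx ler_pdivrMl // mulrC; apply.
Qed.

Lemma specnorm_le (p q : nat) (M : 'M[R]_(p, q)) (c : R) : 0 <= c ->
  (forall x, vnorm2 (M *m x) <= c * vnorm2 x) -> specnorm M <= c.
Proof.
move=> c0 hM; apply: ge_sup.
  by exists (vnorm2 (M *m 0)), 0 => //=; rewrite vnorm20.
by move=> _ [x x1 <-]; apply: le_trans (hM x) _; rewrite ler_piMr.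
Qed.

Lemma specnormD (p q : nat) (M N : 'M[R]_(p, q)) :
  specnorm (M + N) <= specnorm M + specnorm N.
Proof.
apply: specnorm_le; first by rewrite addr_ge0 ?specnorm_ge0.
move=> x; rewrite mulmxDl mulrDl; apply: le_trans (vnorm2D_le _ _) _.
by rewrite lerD ?vnorm2_mulmx_le.
Qed.

Lemma specnormZ (p q : nat) (a : R) (M : 'M[R]_(p, q)) :
  specnorm (a *: M) <= `|a| * specnorm M.
Proof.
apply: specnorm_le; first by rewrite mulr_ge0 ?specnorm_ge0.
by move=> x; rewrite -scalemxAl vnorm2Z -mulrA ler_wpM2l ?vnorm2_mulmx_le.
Qed.

Lemma specnormB (p q : nat) (M N : 'M[R]_(p, q)) :
  specnorm (M - N) <= specnorm M + specnorm N.
Proof.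
apply: le_trans (specnormD _ _) _; rewrite lerD2l -scaleN1r.
by apply: le_trans (specnormZ _ _) _; rewrite normrN normr1 mul1r.
Qed.

Lemma specnorm_mulmx (p q r : nat) (M : 'M[R]_(p, q)) (N : 'M[R]_(q, r)) :
  specnorm (M *m N) <= specnorm M * specnorm N.
Proof.
apply: specnorm_le; first by rewrite mulr_ge0 ?specnorm_ge0.
move=> x; rewrite -mulmxA -mulrA; apply: le_trans (vnorm2_mulmx_le _ _) _.
by rewrite ler_wpM2l ?specnorm_ge0 ?vnorm2_mulmx_le.
Qed.

(* Testing [M] against the vectors [a x] and [b M x] with [a = |M x|], [b = |x|]
   turns the bilinear bound into [|x| |M x|^3 <= c |x|^2 |M x|^2]. *)
Lemma vnorm2_mulmx_le_bilinear (p q : nat) (M : 'M[R]_(p, q)) (c : R) : 0 <= c ->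
  (forall x y, 2 * dotmx y (M *m x) <= c * (vnorm2 x ^+ 2 + vnorm2 y ^+ 2)) ->
  forall x, vnorm2 (M *m x) <= c * vnorm2 x.
Proof.
move=> c0 hM x; have [->|x0] := eqVneq x 0; first by rewrite mulmx0 !vnorm20 mulr0.
have b_gt0 : 0 < vnorm2 x by rewrite vnorm2_gt0.
have := hM (vnorm2 (M *m x) *: x) (vnorm2 x *: (M *m x)).
rewrite -scalemxAr dotmxZl dotmxZr -vnorm2_sqr !vnorm2Z !ger0_norm ?vnorm2_ge0 //.
set a := vnorm2 (M *m x); set b := vnorm2 x => hab.
have [->|a_gt0] := eqVneq a 0; first by rewrite mulr_ge0 ?(ltW b_gt0).
have : 0 <= (a ^+ 2 * b) * (c * b - a) by nra.
by rewrite pmulr_rge0 ?subr_ge0 // mulr_gt0 ?exprn_gt0 // lt_def a_gt0 vnorm2_ge0.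
Qed.

Lemma specnorm_trmx (p q : nat) (M : 'M[R]_(p, q)) : specnorm M^T = specnorm M.
Proof.
suff le_tr p' q' (N : 'M[R]_(p', q')) : specnorm N^T <= specnorm N.
  by apply/le_anti/andP; split; [|rewrite -{1}[M]trmxK]; apply: le_tr.
have N_ge0 := specnorm_ge0 N; apply: (specnorm_le N_ge0).
apply: (vnorm2_mulmx_le_bilinear N_ge0) => x y; rewrite dotmx_mulmx trmxK dotmxC.
have := ler_norm (dotmx x (N *m y)); have := normr_dotmx_le x (N *m y).
have := ler_wpM2l (vnorm2_ge0 x) (vnorm2_mulmx_le N y).
have := sqr_ge0 (vnorm2 x - vnorm2 y); nra.
Qed.

(* Polarization: [4 y^T P x = (x + y)^T P (x + y) - (x - y)^T P (x - y)]. *)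
Lemma specnorm_loewner_le (k : nat) (P : 'M[R]_k) (mu : R) : 0 <= mu ->
  P^T = P -> loewner_le 0 P -> loewner_le P mu%:M -> specnorm P <= mu.
Proof.
move=> mu0 sP P0 Pmu; apply: (specnorm_le mu0).
apply: (vnorm2_mulmx_le_bilinear mu0) => x y.
have quad (Q : 'M[R]_k) z : (z^T *m Q *m z) 0 0 = dotmx z (Q *m z).
  by rewrite -mulmxA.
have := Pmu (x + y); have := P0 (x - y); have := dotmxvv_ge0 (x - y).
rewrite !quad mul0mx mul_scalar_mx dotmxZr {2}/dotmx mulmx0 mxE.
have sym : dotmx x (P *m y) = dotmx y (P *m x).
  by rewrite dotmx_mulmx sP dotmxC.
rewrite !(mulmxDr, mulmxBr, mulmxN, dotmxBl, dotmxBr, dotmxDl, dotmxDr, dotmxNr).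
by rewrite -!vnorm2_sqr sym (dotmxC x y); nra.
Qed.

Lemma vnorm2_col_mx_le (p1 p2 q1 q2 : nat) (u1 : 'cV[R]_p1) (u2 : 'cV[R]_p2)
    (v1 : 'cV[R]_q1) (v2 : 'cV[R]_q2) (c : R) : 0 <= c ->
  vnorm2 u1 <= c * vnorm2 v1 -> vnorm2 u2 <= c * vnorm2 v2 ->
  vnorm2 (col_mx u1 u2) <= c * vnorm2 (col_mx v1 v2).
Proof.
move=> c0 h1 h2.
rewrite -ler_sqr ?nnegrE ?mulr_ge0 ?vnorm2_ge0 // exprMn !vnorm2_col_mx mulrDr.
by rewrite -!exprMn lerD // ler_sqr ?nnegrE ?mulr_ge0 ?vnorm2_ge0.
Qed.

Lemma specnorm_block_diag_le (p1 p2 q1 q2 : nat) (A : 'M[R]_(p1, q1))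
    (D : 'M[R]_(p2, q2)) (c : R) : 0 <= c ->
  specnorm A <= c -> specnorm D <= c -> specnorm (block_mx A 0 0 D) <= c.
Proof.
move=> c0 hA hD; apply: (specnorm_le c0) => x.
rewrite -[x]vsubmxK mul_block_col !mul0mx addr0 add0r.
apply: (vnorm2_col_mx_le c0); apply: le_trans (vnorm2_mulmx_le _ _) _;
  by rewrite ler_wpM2r ?vnorm2_ge0.
Qed.

Lemma specnorm_block_antidiag_le (p1 p2 q1 q2 : nat) (B : 'M[R]_(p1, q2))
    (C : 'M[R]_(p2, q1)) (c : R) : 0 <= c ->
  specnorm B <= c -> specnorm C <= c -> specnorm (block_mx 0 B C 0) <= c.
Proof.
move=> c0 hB hC; apply: (specnorm_le c0) => x.
rewrite -[x]vsubmxK mul_block_col !mul0mx addr0 add0r.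
have -> : vnorm2 (col_mx (usubmx x) (dsubmx x)) =
          vnorm2 (col_mx (dsubmx x) (usubmx x)).
  by rewrite !vnorm2E -!vnorm2_sqr !vnorm2_col_mx addrC.
apply: (vnorm2_col_mx_le c0); apply: le_trans (vnorm2_mulmx_le _ _) _;
  by rewrite ler_wpM2r ?vnorm2_ge0.
Qed.

End SpectralNorm.

Section ConstraintMaps.
Variables (R : realType) (n m : nat).
Implicit Types (A : 'M[R]_n) (B : 'M[R]_(n, m)) (P : 'M[R]_n) (Y : 'M[R]_(m, n)).

Lemma Xmat_sub A1 B1 A2 B2 P Y :
  Xmat A1 B1 P Y - Xmat A2 B2 P Y = Xmat (A1 - A2) (B1 - B2) P Y.
Proof. by rewrite /Xmat !mulmxBl !opprD !opprK addrACA. Qed.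

Lemma specnorm_Xmat_le A B P Y (mu : R) : 0 <= mu -> P^T = P ->
    loewner_le 0 P -> loewner_le P mu%:M -> specnorm Y <= mu ->
  specnorm (Xmat A B P Y) <= mu * (specnorm A + specnorm B).
Proof.
move=> mu0 sP P0 Pmu hY; apply: le_trans (specnormB _ _) _.
rewrite mulrDr ![mu * _]mulrC lerD //; apply: le_trans (specnorm_mulmx _ _) _;
  by rewrite ler_wpM2l ?specnorm_ge0 ?(specnorm_loewner_le mu0 sP P0 Pmu).
Qed.

Context {P : 'M[R]_n} {Y : 'M[R]_(m, n)} {gamma : R}.
Context {A1 A2 : 'M[R]_n} {B1 B2 : 'M[R]_(n, m)}.
Let D := Xmat (A1 - A2) (B1 - B2) P Y.

Lemma f1_sub (alpha : R) :
  f1 alpha P Y gamma A1 B1 - f1 alpha P Y gamma A2 B2 = D + D^T.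
Proof.
rewrite /D -Xmat_sub /f1; move: (Xmat A1 B1 P Y) (Xmat A2 B2 P Y) => X1 X2.
by apply/matrixP => i j; rewrite !mxE; ring.
Qed.

Lemma f2_sub (r : R) :
  f2 r P Y gamma A1 B1 - f2 r P Y gamma A2 B2 = block_mx 0 D D^T 0.
Proof.
rewrite /D -Xmat_sub /f2; move: (Xmat A1 B1 P Y) (Xmat A2 B2 P Y) => X1 X2.
rewrite opprB addrA subrK opp_block_mx add_block_mx.
by congr block_mx; apply/matrixP => i j; rewrite !mxE; ring.
Qed.

Lemma f3_sub (theta : R) :
  f3 theta P Y gamma A1 B1 - f3 theta P Y gamma A2 B2 =
  block_mx (sin theta *: (D + D^T)) (cos theta *: (D - D^T))
           (cos theta *: (D^T - D)) (sin theta *: (D + D^T)).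
Proof.
rewrite /D -Xmat_sub /f3; move: (Xmat A1 B1 P Y) (Xmat A2 B2 P Y) => X1 X2.
rewrite opprB addrA subrK opp_block_mx add_block_mx.
by congr block_mx; apply/matrixP => i j; rewrite !mxE; ring.
Qed.

Lemma specnorm_add_trmx_le : specnorm (D + D^T) <= 2 * specnorm D.
Proof.
by apply: le_trans (specnormD _ _) _; rewrite specnorm_trmx mulr_natl mulr2n.
Qed.

Lemma specnorm_f1_sub (alpha : R) :
  specnorm (f1 alpha P Y gamma A1 B1 - f1 alpha P Y gamma A2 B2) <= 2 * specnorm D.
Proof. by rewrite f1_sub specnorm_add_trmx_le. Qed.

Lemma specnorm_f2_sub (r : R) :
  specnorm (f2 r P Y gamma A1 B1 - f2 r P Y gamma A2 B2) <= specnorm D.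
Proof.
by rewrite f2_sub specnorm_block_antidiag_le ?specnorm_trmx ?specnorm_ge0.
Qed.

Lemma specnorm_f3_sub (theta : R) :
  specnorm (f3 theta P Y gamma A1 B1 - f3 theta P Y gamma A2 B2) <=
  2 * (`|sin theta| + `|cos theta|) * specnorm D.
Proof.
have D_ge0 := specnorm_ge0 D.
have cos_le (E F : 'M[R]_n) :
    specnorm E = specnorm D -> specnorm F = specnorm D ->
    specnorm (cos theta *: (E - F)) <= `|cos theta| * (2 * specnorm D).
  move=> hE hF; apply: le_trans (specnormZ _ _) _; rewrite ler_wpM2l //.
  by apply: le_trans (specnormB _ _) _; rewrite hE hF mulr_natl mulr2n.
have sin_le :
    specnorm (sin theta *: (D + D^T)) <= `|sin theta| * (2 * specnorm D).
  by apply: le_trans (specnormZ _ _) _; rewrite ler_wpM2l ?specnorm_add_trmx_le.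
rewrite f3_sub; set S := sin theta *: _.
set K := cos theta *: _; set K' := cos theta *: _.
have -> : block_mx S K K' S = block_mx S 0 0 S + block_mx 0 K K' 0.
  by rewrite add_block_mx !addr0 !add0r.
apply: le_trans (specnormD _ _) _; rewrite mulrDr mulrDl ![2 * `|_|]mulrC -!mulrA.
rewrite lerD ?specnorm_block_diag_le ?specnorm_block_antidiag_le ?cos_le //;
  by rewrite ?specnorm_trmx ?mulr_ge0 ?mulr_ge0.
Qed.

End ConstraintMaps.

Theorem lemma1 (R : realType) (V : normedModType R) (Xi : set V) (n m : nat)
  (At : V -> 'M[R]_n) (Bt : V -> 'M[R]_(n, m)) (LA LB : R)
  (hA : forall xi1 xi2, xi1 \in Xi -> xi2 \in Xi ->
          specnorm (At xi1 - At xi2) <= LA * `|xi1 - xi2|)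
  (hB : forall xi1 xi2, xi1 \in Xi -> xi2 \in Xi ->
          specnorm (Bt xi1 - Bt xi2) <= LB * `|xi1 - xi2|)
  (alpha r theta mu : R) (halpha : 0 < alpha) (hr : 0 < r) (hmu : 0 < mu) :
  let L := 2 * mu * (LA + LB) * Num.max 1 (`|sin theta| + `|cos theta|) in
  forall (P : 'M[R]_n) (Y : 'M[R]_(m, n)) (gamma : R),
    P^T = P -> loewner_le 0 P -> loewner_le P (mu%:M) -> specnorm Y <= mu ->
  forall xi1 xi2, xi1 \in Xi -> xi2 \in Xi ->
    [/\ specnorm (f1 alpha P Y gamma (At xi1) (Bt xi1)
                  - f1 alpha P Y gamma (At xi2) (Bt xi2)) <= L * `|xi1 - xi2|,
        specnorm (f2 r P Y gamma (At xi1) (Bt xi1)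
                  - f2 r P Y gamma (At xi2) (Bt xi2)) <= L * `|xi1 - xi2| &
        specnorm (f3 theta P Y gamma (At xi1) (Bt xi1)
                  - f3 theta P Y gamma (At xi2) (Bt xi2)) <= L * `|xi1 - xi2|].
Proof.
move=> L P Y gamma sP P0 Pmu hY xi1 xi2 h1 h2.
have hD : specnorm (Xmat (At xi1 - At xi2) (Bt xi1 - Bt xi2) P Y) <=
          mu * (LA + LB) * `|xi1 - xi2|.
  apply: le_trans (specnorm_Xmat_le _ _ (ltW hmu) sP P0 Pmu hY) _.
  by rewrite -mulrA ler_wpM2l ?(ltW hmu) // mulrDl lerD ?hA ?hB.
set d := specnorm _ in hD; have d_ge0 : 0 <= d := specnorm_ge0 _.
set M := Num.max 1 (`|sin theta| + `|cos theta|).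
have M_ge1 : 1 <= M by rewrite le_max lexx.
have M_ge_sc : `|sin theta| + `|cos theta| <= M by rewrite le_max lexx orbT.
have hd : 2 * M * d <= L * `|xi1 - xi2| by rewrite /L -/M; nra.
split; apply: le_trans hd.
- by apply: le_trans (specnorm_f1_sub alpha) _; rewrite -/d; nra.
- by apply: le_trans (specnorm_f2_sub r) _; rewrite -/d; nra.
- by apply: le_trans (specnorm_f3_sub theta) _; rewrite -/d; nra.
Qed.
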